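(* Let $k$ be an algebraically closed field of characteristic $p\ge0$, $n\ge1$, and let $\pi : \mathrm{GL}(n,k)\to\mathrm{PGL}(n,k)$ be the natural surjection. Let $\theta_i : \mathbb{G}_a\to\mathrm{PGL}(n,k)$ $(i=1,2)$ be homomorphisms of algebraic groups and $\varphi_i : \mathbb{G}_a\to\mathrm{GL}(n,k)$ $(i=1,2)$ homomorphisms of algebraic groups with $\theta_i = \pi\circ\varphi_i$. Then the following are equivalent: (1) $\theta_1$ and $\theta_2$ are equivalent, i.e. there exists $P\in\mathrm{GL}(n,k)$ with $\theta_2(t) = [P]\,\theta_1(t)\,[P]^{-1}$ for all $t\in\mathbb{G}_a$; (2) $\varphi_1$ and $\varphi_2$ are equivalent, i.e. there exists $Q\in\mathrm{GL}(n,k)$ with $\varphi_2(t) = Q\,\varphi_1(t)\,Q^{-1}$ for all $t\in\mathbb{G}_a$.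
   Context: $\mathbb{G}_a$ denotes the additive group of $k$; $[P] = \pi(P)$ denotes the class of $P$ in $\mathrm{PGL}(n,k)$. *)

From HB Require Import structures.
From mathcomp Require Import all_boot all_order all_algebra.
Set Implicit Arguments. Unset Strict Implicit. Unset Printing Implicit Defensive.
Import GRing.Theory.
Local Open Scope ring_scope.

(* A morphism of varieties G_a = A^1 -> M_n(k) is a matrix of polynomials
   in one variable t; [mx_eval Phi t] is its value at t \in k. *)
Definition mx_eval (k : fieldType) (n : nat) (Phi : 'M[{poly k}]_n) (t : k)
  : 'M[k]_n := map_mx (fun p => p.[t]) Phi.

(* Homomorphism of algebraic groups G_a -> GL(n,k): a polynomial matrix
   map with phi(0) = I and phi(s+t) = phi(s) phi(t)
   (invertibility then follows: phi(t) phi(-t) = I). *)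
Definition Ga_hom_GL (k : fieldType) (n : nat) (Phi : 'M[{poly k}]_n) : Prop :=
  mx_eval Phi 0 = 1%:M /\
  forall s t : k, mx_eval Phi (s + t) = mx_eval Phi s *m mx_eval Phi t.

Definition pgl_eq (k : fieldType) (n : nat) (A B : 'M[k]_n) : Prop :=
  exists c : k, c != 0 /\ A = c *: B.

(* Two lifts φ, ψ : G_a → GL(n) of the same homomorphism G_a → PGL(n)
   differ by a scalar function, ψ(t) = c(t) φ(t), and c is a character of
   the additive group: c(s + t) = c(s) c(t).  Every polynomial character of
   G_a is trivial (a nonconstant one would vanish somewhere, while
   c(x) c(-x) = 1), so det φ = det ψ = 1 and therefore c(t)^n = 1.  An
   additive character with values in the n-th roots of unity is trivial: in
   characteristic 0 write t = n (t/n); in characteristic p, c(t)^p = c(p t) = 1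
   and the Frobenius is injective.  Hence (1) ⇒ (2) by applying this to φ₂
   and P φ₁ P⁻¹; (2) ⇒ (1) is immediate. *)
From mathcomp Require Import all_boot all_order all_algebra.
Import GRing.Theory.
Local Open Scope ring_scope.

Lemma addchar_root_of_unity_eq1 {F : fieldType} {N : nat} {c : F -> F} :
  (0 < N)%N -> {morph c : s t / s + t >-> s * t} ->
  (forall t, c t ^+ N = 1) -> forall t, c t = 1.
Proof.
move=> N_gt0 cD cN.
have c_neq0 t : c t != 0 by rewrite -unitfE -(unitrX_pos _ N_gt0) cN unitr1.
have c0 : c 0 = 1 by apply: (mulIf (c_neq0 0)); rewrite -cD addr0 mul1r.
have cMn t m : c (t *+ m) = c t ^+ m.
  by elim: m => [|m IHm]; rewrite ?c0 // mulrS cD IHm exprS.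
have [/eqP/(natf0_pchar N_gt0)[p pF] t | N_neq0 t] := eqVneq (N%:R : F) 0.
  have ctp : c t ^+ p = 1 by rewrite -cMn mulrn_pchar.
  by apply: (fmorph_inj (pFrobenius_aut pF)); rewrite rmorph1; exact: ctp.
by rewrite -(divfK N_neq0 t) mulr_natr cMn cN.
Qed.

Lemma poly_addchar_eq1 {k : closedFieldType} (p : {poly k}) :
  p.[0] = 1 -> {morph horner p : s t / s + t >-> s * t} -> p = 1.
Proof.
move=> p0 pD.
have [p_const | /closed_rootP[x /rootP px]] := eqVneq (size p) 1%N.
  by move: p0; rewrite (size1_polyC (eq_leq p_const)) hornerC => ->.
by have := pD x (- x); rewrite subrr p0 px mul0r => /eqP; rewrite oner_eq0.
Qed.

Lemma mx_evalE {k : fieldType} {n : nat} (Phi : 'M[{poly k}]_n) (t : k) :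
  mx_eval Phi t = map_mx (horner_eval t) Phi.
Proof. by []. Qed.

Lemma det_mx_eval {k : fieldType} {n : nat} (Phi : 'M[{poly k}]_n) (t : k) :
  \det (mx_eval Phi t) = (\det Phi).[t].
Proof. by rewrite mx_evalE det_map_mx. Qed.

Lemma det_mx_eval_Ga_hom_GL {k : closedFieldType} {n : nat}
    {Phi : 'M[{poly k}]_n} :
  Ga_hom_GL Phi -> forall t, \det (mx_eval Phi t) = 1.
Proof.
move=> [Phi0 PhiD] t.
have det_Phi : \det Phi = 1.
  apply: poly_addchar_eq1 => [|s u]; rewrite -!det_mx_eval.
    by rewrite Phi0 det1.
  by rewrite PhiD det_mulmx.
by rewrite det_mx_eval det_Phi -polyC1 hornerC.
Qed.

Lemma Ga_hom_GL_pgl_eq {k : closedFieldType} {n : nat}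
    (Phi Psi : 'M[{poly k}]_n.+1) :
  Ga_hom_GL Phi -> Ga_hom_GL Psi ->
  (forall t, pgl_eq (mx_eval Psi t) (mx_eval Phi t)) ->
  forall t, mx_eval Psi t = mx_eval Phi t.
Proof.
move=> hPhi hPsi Psi_Phi.
have ex_c t : exists c, mx_eval Psi t == c *: mx_eval Phi t.
  by have [c [_ ->]] := Psi_Phi t; exists c.
pose c t := xchoose (ex_c t).
have cP t : mx_eval Psi t = c t *: mx_eval Phi t.
  exact/eqP/(xchooseP (ex_c t)).
have Phi_neq0 t : mx_eval Phi t != 0.
  apply/eqP => Phi0; have /eqP := det_mx_eval_Ga_hom_GL hPhi t.
  by rewrite Phi0 det0 eq_sym oner_eq0.
have cD : {morph c : s u / s + u >-> s * u}.
  move=> s u; have := cP (s + u).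
  rewrite hPsi.2 !cP -scalemxAl -scalemxAr scalerA -hPhi.2 => /eqP.
  rewrite -subr_eq0 -scalerBl scaler_eq0 (negbTE (Phi_neq0 _)) orbF.
  by rewrite subr_eq0 => /eqP.
have cN t : c t ^+ n.+1 = 1.
  have := det_mx_eval_Ga_hom_GL hPsi t.
  by rewrite cP detZ det_mx_eval_Ga_hom_GL // mulr1.
by move=> t; rewrite cP (addchar_root_of_unity_eq1 (ltn0Sn n) cD cN) scale1r.
Qed.

Definition polymx_conj {k : fieldType} {n : nat} (P : 'M[k]_n)
    (Phi : 'M[{poly k}]_n) : 'M[{poly k}]_n :=
  map_mx polyC P *m Phi *m map_mx polyC (invmx P).

Lemma mx_eval_conj {k : fieldType} {n : nat} (P : 'M[k]_n)
    (Phi : 'M[{poly k}]_n) (t : k) :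
  mx_eval (polymx_conj P Phi) t = P *m mx_eval Phi t *m invmx P.
Proof.
rewrite !mx_evalE !map_mxM; congr (_ *m _ *m _);
by apply/matrixP => i j; rewrite !mxE; exact: hornerC.
Qed.

Lemma Ga_hom_GL_conj {k : fieldType} {n : nat} (P : 'M[k]_n)
    (Phi : 'M[{poly k}]_n) :
  P \in unitmx -> Ga_hom_GL Phi -> Ga_hom_GL (polymx_conj P Phi).
Proof.
move=> Pu [Phi0 PhiD]; split; first by rewrite mx_eval_conj Phi0 mulmx1 mulmxV.
by move=> s t; rewrite !mx_eval_conj PhiD !mulmxA mulmxKV.
Qed.

Theorem lemma1p7 (k : closedFieldType) (n : nat) (hn : (0 < n)%N)
  (Phi1 Phi2 : 'M[{poly k}]_n)
  (h1 : Ga_hom_GL Phi1) (h2 : Ga_hom_GL Phi2) :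
  (exists P : 'M[k]_n, P \in unitmx /\
     forall t : k,
       pgl_eq (mx_eval Phi2 t) (P *m mx_eval Phi1 t *m invmx P))
  <->
  (exists Q : 'M[k]_n, Q \in unitmx /\
     forall t : k, mx_eval Phi2 t = Q *m mx_eval Phi1 t *m invmx Q).
Proof.
case: n hn Phi1 Phi2 h1 h2 => // n _ Phi1 Phi2 h1 h2.
split=> [[P [Pu HP]] | [Q [Qu HQ]]]; [exists P | exists Q]; split=> // t.
  rewrite -mx_eval_conj; apply: Ga_hom_GL_pgl_eq => // [|u].
    exact: Ga_hom_GL_conj.
  by rewrite mx_eval_conj.
by exists 1; rewrite oner_neq0 scale1r HQ.
Qed.
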